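(* Let $\mathbf{F}$ and $\mathbf{E}$ be normed spaces of functions over a set $X$ and let $T:\mathbf{F}\to\mathbf{E}$ be a bounded linear operator. The following are equivalent: (i) there is $\omega:X\to\mathbb{C}$ such that $Tf=\omega f$ for all $f\in\mathbf{F}$; (ii) $T\mathbf{F}_Y\subset\mathbf{E}_Y$ for every $Y\subset X$; (iii) $T\mathbf{F}_{X\setminus\{x\}}\subset\mathbf{E}_{X\setminus\{x\}}$ for every $x\in X$; (iv) $T^*x_{\mathbf{E}}\in\mathbb{C}x_{\mathbf{F}}$ for every $x\in X$.
   Context: A normed space of functions (NSF) over a set $X$ is a linear subspace of the space of all functions $X\to\mathbb{C}$ with a norm for which every point evaluation $x_{\mathbf{F}}:f\mapsto f(x)$ is a bounded functional. For $Y\subset X$, $\mathbf{F}_Y=\{f\in\mathbf{F}:\ f(x)=0\text{ for all }x\in X\setminus Y\}$. *)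

From Stdlib Require Import Reals.
From Coquelicot Require Export Coquelicot.
Export Complex.
Set Implicit Arguments.

(* A normed space of functions (NSF) over a set X: a linear subspace [nsf_mem]
   of the space of all functions X -> C, with a norm [nsf_norm] (meaningful on
   members), such that every point evaluation f |-> f x is bounded. *)
Record NSF (X : Type) := {
  nsf_mem : (X -> C) -> Prop;
  nsf_norm : (X -> C) -> R;
  nsf_mem0 : nsf_mem (fun _ => RtoC 0);
  nsf_memD : forall f g, nsf_mem f -> nsf_mem g -> nsf_mem (fun x => Cplus (f x) (g x));
  nsf_memZ : forall (a : C) f, nsf_mem f -> nsf_mem (fun x => Cmult a (f x));
  nsf_norm_ge0 : forall f, nsf_mem f -> (0 <= nsf_norm f)%R;
  nsf_norm_eq0 : forall f, nsf_mem f -> nsf_norm f = 0%R -> forall x, f x = RtoC 0;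
  nsf_normZ : forall (a : C) f, nsf_mem f ->
      nsf_norm (fun x => Cmult a (f x)) = (Cmod a * nsf_norm f)%R;
  nsf_normD : forall f g, nsf_mem f -> nsf_mem g ->
      (nsf_norm (fun x => Cplus (f x) (g x)) <= nsf_norm f + nsf_norm g)%R;
  nsf_eval_bounded : forall x : X, exists c : R,
      forall f, nsf_mem f -> (Cmod (f x) <= c * nsf_norm f)%R
}.

Definition nsf_sub X (F : NSF X) (Y : X -> Prop) (f : X -> C) : Prop :=
  nsf_mem F f /\ forall x, ~ Y x -> f x = RtoC 0.

(* T : F -> E bounded linear operator (given as a map on functions, whose
   behaviour outside F is irrelevant). *)
Definition bounded_linear X (F E : NSF X) (T : (X -> C) -> (X -> C)) : Prop :=
  (forall f, nsf_mem F f -> nsf_mem E (T f)) /\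
  (forall f g, nsf_mem F f -> nsf_mem F g ->
     T (fun x => Cplus (f x) (g x)) = (fun x => Cplus (T f x) (T g x))) /\
  (forall (a : C) f, nsf_mem F f ->
     T (fun x => Cmult a (f x)) = (fun x => Cmult a (T f x))) /\
  (exists M : R, forall f, nsf_mem F f -> (nsf_norm E (T f) <= M * nsf_norm F f)%R).

Definition pt_eval X (x : X) : (X -> C) -> C := fun f => f x.

Definition adjoint X (T : (X -> C) -> (X -> C)) (phi : (X -> C) -> C) : (X -> C) -> C :=
  fun f => phi (T f).

(* For each point x, the functionals f |-> (T f)(x) and f |-> f(x) are linear on F, and
   (iii) says exactly that the kernel of the second is contained in that of the first;
   hence they are proportional, which is (iv), and the proportionality constants form
   the multiplier w of (i). *)

From Stdlib Require Import Reals.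
From Coquelicot Require Import Coquelicot.
From Stdlib Require Import Classical ClassicalChoice FunctionalExtensionality.

Local Open Scope C_scope.

Definition linear_functional {X : Type} (F : NSF X) (phi : (X -> C) -> C) : Prop :=
  (forall f g, nsf_mem F f -> nsf_mem F g ->
     phi (fun x => f x + g x) = phi f + phi g) /\
  (forall (a : C) f, nsf_mem F f -> phi (fun x => a * f x) = a * phi f).

Section LinearFunctionals.

Context {X : Type} {F : NSF X}.

Lemma linear_functional_pt_eval (x : X) : linear_functional F (pt_eval x).
Proof. split; reflexivity. Qed.

Lemma linear_functional_adjoint {E : NSF X} {T : (X -> C) -> (X -> C)} {phi : (X -> C) -> C} :
  bounded_linear F E T -> linear_functional E phi -> linear_functional F (adjoint T phi).
Proof.
  intros [HTmem [HTadd [HTscal _]]] [Hadd Hscal]; unfold adjoint; split.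
  - intros f g Hf Hg. rewrite HTadd by assumption. apply Hadd; auto.
  - intros a f Hf. rewrite HTscal by assumption. apply Hscal; auto.
Qed.

Lemma linear_functional_proportional (phi psi : (X -> C) -> C) :
  linear_functional F phi -> linear_functional F psi ->
  (forall f, nsf_mem F f -> psi f = 0 -> phi f = 0) ->
  exists c : C, forall f, nsf_mem F f -> phi f = c * psi f.
Proof.
  intros [phi_add phi_scal] [psi_add psi_scal] Hker.
  destruct (classic (exists g, nsf_mem F g /\ psi g <> 0)) as [[g [Hg Hpsig]] | Hpsi0].
  - exists (phi g / psi g). intros f Hf.
    set (a := - (psi f / psi g)).
    assert (Hag : nsf_mem F (fun x => a * g x)) by (apply nsf_memZ; assumption).
    assert (Hh : phi (fun x => f x + a * g x) = 0).
    { apply Hker; [apply nsf_memD; assumption |].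
      rewrite psi_add, psi_scal by assumption. unfold a. field. assumption. }
    rewrite phi_add, phi_scal in Hh by assumption.
    replace (phi f) with (phi f + a * phi g - a * phi g) by ring.
    rewrite Hh. unfold a. field. assumption.
  - exists 0. intros f Hf. rewrite Cmult_0_l. apply Hker; [assumption |].
    apply NNPP. intro Hpsif. apply Hpsi0. exists f. auto.
Qed.

Lemma nsf_sub_compl_point {x : X} {f : X -> C} :
  nsf_mem F f -> f x = 0 -> nsf_sub F (fun y => y <> x) f.
Proof.
  intros Hf Hfx. split; [assumption |].
  intros y Hy. apply NNPP in Hy. subst y. assumption.
Qed.

End LinearFunctionals.

Section Multipliers.

Context {X : Type} {F E : NSF X} {T : (X -> C) -> (X -> C)}.
Hypothesis hT : bounded_linear F E T.

Lemma multiplier_maps_sub {w : X -> C} :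
  (forall f, nsf_mem F f -> T f = (fun x => w x * f x)) ->
  forall (Y : X -> Prop) f, nsf_sub F Y f -> nsf_sub E Y (T f).
Proof.
  intros Hw Y f [Hf Hz]. split; [apply hT; assumption |].
  intros x Hx. rewrite (Hw f Hf), (Hz x Hx). apply Cmult_0_r.
Qed.

Lemma adjoint_pt_eval_proportional :
  (forall (x : X) f, nsf_sub F (fun y => y <> x) f -> nsf_sub E (fun y => y <> x) (T f)) ->
  forall x : X, exists c : C, forall f, nsf_mem F f ->
    adjoint T (pt_eval x) f = c * pt_eval x f.
Proof.
  intros HT x. apply linear_functional_proportional.
  - apply (linear_functional_adjoint hT), linear_functional_pt_eval.
  - apply linear_functional_pt_eval.
  - intros f Hf Hfx. apply (HT x f (nsf_sub_compl_point Hf Hfx)). auto.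
Qed.

Lemma multiplier_of_adjoint_pt_eval :
  (forall x : X, exists c : C, forall f, nsf_mem F f ->
     adjoint T (pt_eval x) f = c * pt_eval x f) ->
  exists w : X -> C, forall f, nsf_mem F f -> T f = (fun x => w x * f x).
Proof.
  intros Hc. destruct (choice _ Hc) as [w Hw]. exists w.
  intros f Hf. apply functional_extensionality. intro x. apply (Hw x f Hf).
Qed.

End Multipliers.

Theorem proposition2p4 (X : Type) (F E : NSF X) (T : (X -> C) -> (X -> C))
  (hT : bounded_linear F E T) :
  let P1 := exists w : X -> C, forall f, nsf_mem F f -> T f = (fun x => Cmult (w x) (f x)) in
  let P2 := forall (Y : X -> Prop) f, nsf_sub F Y f -> nsf_sub E Y (T f) in
  let P3 := forall (x : X) f, nsf_sub F (fun y => y <> x) f ->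
              nsf_sub E (fun y => y <> x) (T f) in
  let P4 := forall x : X, exists c : C, forall f, nsf_mem F f ->
              adjoint T (pt_eval x) f = Cmult c (pt_eval x f) in
  (P1 <-> P2) /\ (P2 <-> P3) /\ (P3 <-> P4).
Proof.
  intros P1 P2 P3 P4.
  assert (H12 : P1 -> P2) by (intros [w Hw]; exact (multiplier_maps_sub hT Hw)).
  assert (H23 : P2 -> P3) by (intros H2 x; apply H2).
  assert (H34 : P3 -> P4) by exact (adjoint_pt_eval_proportional hT).
  assert (H41 : P4 -> P1) by exact multiplier_of_adjoint_pt_eval.
  tauto.
Qed.
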